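(* Let $(X,d)$ be a geodesic metric space, and assume that for every $\lambda>0$ the kernel $k_\lambda(x,y)=\exp(-\lambda\, d^2(x,y))$ is a positive definite kernel on $X$. Then $(X,d)$ is flat in the sense of Alexandrov.
   Context: A path $\gamma\colon[0,L]\to X$ is a geodesic from $x$ to $y$ if $\gamma(0)=x$, $\gamma(L)=y$ and $d(\gamma(t),\gamma(t'))=|t-t'|$ for all $t,t'\in[0,L]$. A metric space is a geodesic metric space if every pair of points is joined by a geodesic. A geodesic triangle consists of three points $a,b,c$ together with geodesics $\gamma_{ab},\gamma_{bc},\gamma_{ac}$ joining them. A geodesic metric space $(X,d)$ is flat in the sense of Alexandrov if every geodesic triangle in $X$ (viewed as a metric subspace with the restricted metric $d$) can be isometrically embedded (i.e. with distances preserved) into a Euclidean space. A positive definite (PD) kernel on a topological space $X$ is a continuous function $k\colon X\times X\to\mathbb{R}$ such that for all $n\in\mathbb{N}$, all $x_1,\dots,x_n\in X$ and all $c_1,\dots,c_n\in\mathbb{R}$, $\sum_{i,j}c_ic_jk(x_i,x_j)\ge 0$; $X$ carries the metric topology. *)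

From Stdlib Require Import Reals Lra.
Open Scope R_scope.

Definition is_metric {X : Type} (d : X -> X -> R) : Prop :=
  (forall x y, 0 <= d x y) /\
  (forall x y, d x y = 0 <-> x = y) /\
  (forall x y, d x y = d y x) /\
  (forall x y z, d x z <= d x y + d y z).

(** gamma : [0,L] -> X (extended arbitrarily outside [0,L]) is a geodesic from x to y. *)
Definition is_geodesic {X : Type} (d : X -> X -> R) (gamma : R -> X) (L : R)
  (x y : X) : Prop :=
  0 <= L /\ gamma 0 = x /\ gamma L = y /\
  (forall t t', 0 <= t <= L -> 0 <= t' <= L -> d (gamma t) (gamma t') = Rabs (t - t')).

Definition geodesic_space {X : Type} (d : X -> X -> R) : Prop :=
  is_metric d /\ forall x y : X, exists (gamma : R -> X) (L : R), is_geodesic d gamma L x y.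

Definition on_path {X : Type} (gamma : R -> X) (L : R) (p : X) : Prop :=
  exists t, 0 <= t <= L /\ p = gamma t.

(** Euclidean space R^n: vectors are nat -> R, only the first n coordinates matter. *)
Fixpoint sumsq (n : nat) (u v : nat -> R) : R :=
  match n with
  | O => 0
  | S m => sumsq m u v + (u m - v m) ^ 2
  end.

Definition euclid_dist (n : nat) (u v : nat -> R) : R := sqrt (sumsq n u v).

Definition embeds_in_euclidean {X : Type} (d : X -> X -> R) (S : X -> Prop) : Prop :=
  exists (n : nat) (f : X -> nat -> R),
    forall p q, S p -> S q -> euclid_dist n (f p) (f q) = d p q.

Definition alexandrov_flat {X : Type} (d : X -> X -> R) : Prop :=
  geodesic_space d /\
  forall (a b c : X) (gab gbc gac : R -> X) (Lab Lbc Lac : R),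
    is_geodesic d gab Lab a b ->
    is_geodesic d gbc Lbc b c ->
    is_geodesic d gac Lac a c ->
    embeds_in_euclidean d
      (fun p => on_path gab Lab p \/ on_path gbc Lbc p \/ on_path gac Lac p).

Definition kernel_continuous {X : Type} (d : X -> X -> R) (k : X -> X -> R) : Prop :=
  forall x y eps, 0 < eps -> exists delta, 0 < delta /\
    forall x' y', d x x' < delta -> d y y' < delta -> Rabs (k x y - k x' y') < eps.

(** Positive definite kernel (in the sense of the paper: continuous, and all
    Gram quadratic forms nonnegative). Finite families are indexed by 0..n-1. *)
Fixpoint sum_to (n : nat) (f : nat -> R) : R :=
  match n with
  | O => 0
  | S m => sum_to m f + f m
  end.

Definition pd_kernel {X : Type} (d : X -> X -> R) (k : X -> X -> R) : Prop :=
  kernel_continuous d k /\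
  forall (n : nat) (xs : nat -> X) (c : nat -> R),
    0 <= sum_to n (fun i => sum_to n (fun j => c i * c j * k (xs i) (xs j))).

From Stdlib Require Import Reals Lra Psatz ClassicalEpsilon.
Open Scope R_scope.

(* Expanding the Gaussian kernels to second order in lambda shows that d^2 is
   conditionally negative definite (Schoenberg).  On four points p, x, y, z,
   with p on a geodesic from x to y at fraction s, this yields a quadratic in a
   free coefficient that is never positive and has no constant term, so its
   linear term vanishes: d(z,p)^2 = (1-s) d(z,x)^2 + s d(z,y)^2 - s(1-s) d(x,y)^2,
   exactly as in a Euclidean space.  Hence every point of a geodesic triangle
   abc has barycentric coordinates in which all its squared distances are those
   of the planar triangle with the side lengths of abc, and the Gram matrix of
   that triangle has a square root giving an isometric map into R^2. *)

Lemma sum_to_ext n f g : (forall i, f i = g i) -> sum_to n f = sum_to n g.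
Proof. intros H; induction n as [|n IH]; simpl; [reflexivity|]. now rewrite IH, H. Qed.

Lemma sum_to_le n f g : (forall i, f i <= g i) -> sum_to n f <= sum_to n g.
Proof. intros H; induction n as [|n IH]; simpl; [lra|]. specialize (H n); lra. Qed.

Lemma sum_to_scal_l n a f : sum_to n (fun i => a * f i) = a * sum_to n f.
Proof. induction n as [|n IH]; simpl; [ring|]. rewrite IH; ring. Qed.

Lemma sum_to_scal_r n a f : sum_to n (fun i => f i * a) = sum_to n f * a.
Proof. induction n as [|n IH]; simpl; [ring|]. rewrite IH; ring. Qed.

Lemma sum_to_lin3 n a b f g h :
  sum_to n (fun i => f i + a * g i + b * h i)
  = sum_to n f + a * sum_to n g + b * sum_to n h.
Proof. induction n as [|n IH]; simpl; [ring|]. rewrite IH; ring. Qed.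

Lemma double_sum_to_prod n c :
  sum_to n (fun i => sum_to n (fun j => c i * c j)) = sum_to n c * sum_to n c.
Proof.
  rewrite (sum_to_ext n _ (fun i => c i * sum_to n c)).
  - apply sum_to_scal_r.
  - intros i; apply sum_to_scal_l.
Qed.

Lemma Rle_0_of_le_mult_pos S M : (forall l, 0 < l -> S <= l * M) -> S <= 0.
Proof.
  intros H. destruct (Rle_dec S 0) as [|HS]; [assumption|exfalso].
  pose proof (Rle_abs M) as HM.
  set (l := S / (2 * (Rabs M + 1))).
  assert (Hl : 0 < l) by (unfold l; apply Rdiv_lt_0_compat; pose proof (Rabs_pos M); lra).
  assert (Hl2 : l * (Rabs M + 1) * 2 = S) by (unfold l; field; pose proof (Rabs_pos M); lra).
  specialize (H l Hl). nra.
Qed.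

Lemma linear_coef_eq0_of_quadratic_nonpos B C :
  (forall r, r * B + r * r * C <= 0) -> B = 0.
Proof.
  intros H. pose proof (Rle_abs (- C)) as HC. rewrite Rabs_Ropp in HC.
  apply Rle_antisym; [|apply Ropp_le_cancel; rewrite Ropp_0];
    apply (Rle_0_of_le_mult_pos _ (Rabs C)); intros l Hl;
    apply (Rmult_le_reg_l l); [assumption| |assumption|].
  - specialize (H l). nra.
  - specialize (H (- l)). nra.
Qed.

Lemma exp_neg_le_quadratic u : 0 <= u -> exp (- u) <= 1 - u + u ^ 2.
Proof.
  intros Hu. pose proof (exp_ineq1_le u). rewrite exp_Ropp.
  assert (/ exp u <= / (1 + u)) by (apply Rinv_le_contravar; lra).
  assert (/ (1 + u) <= 1 - u + u ^ 2).
  { apply (Rmult_le_reg_l (1 + u)); [lra|]. rewrite Rinv_r by lra. nra. }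
  lra.
Qed.

Lemma mult_exp_neg_le w u : 0 <= u -> w * exp (- u) <= w * (1 - u) + Rabs w * u ^ 2.
Proof.
  intros Hu. pose proof (exp_ineq1_le (- u)). pose proof (exp_neg_le_quadratic u Hu).
  destruct (Rle_dec 0 w).
  - rewrite Rabs_right by lra. nra.
  - rewrite Rabs_left by lra. nra.
Qed.

Lemma gram_nonpos_of_gaussian_gram_nonneg n (c : nat -> R) (D : nat -> nat -> R) :
  (forall i j, 0 <= D i j) -> sum_to n c = 0 ->
  (forall l, 0 < l ->
     0 <= sum_to n (fun i => sum_to n (fun j => c i * c j * exp (- l * D i j)))) ->
  sum_to n (fun i => sum_to n (fun j => c i * c j * D i j)) <= 0.
Proof.
  intros HD Hc Hexp.
  set (M := sum_to n (fun i => sum_to n (fun j => Rabs (c i * c j) * D i j ^ 2))).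
  apply (Rle_0_of_le_mult_pos _ M). intros l Hl.
  assert (Hub : sum_to n (fun i => sum_to n (fun j => c i * c j * exp (- l * D i j)))
    <= sum_to n (fun i => sum_to n (fun j =>
         c i * c j + (- l) * (c i * c j * D i j) + l ^ 2 * (Rabs (c i * c j) * D i j ^ 2)))).
  { apply sum_to_le; intros i; apply sum_to_le; intros j.
    replace (- l * D i j) with (- (l * D i j)) by ring.
    pose proof (mult_exp_neg_le (c i * c j) (l * D i j)
                  (Rmult_le_pos _ _ (Rlt_le _ _ Hl) (HD i j))).
    nra. }
  rewrite (sum_to_ext n (fun i => sum_to n (fun j => _ + _ + _))
            (fun i => sum_to n (fun j => c i * c j)
              + (- l) * sum_to n (fun j => c i * c j * D i j)
              + l ^ 2 * sum_to n (fun j => Rabs (c i * c j) * D i j ^ 2))) in Hub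
    by (intro i; apply sum_to_lin3).
  rewrite sum_to_lin3, double_sum_to_prod, Hc in Hub. fold M in Hub.
  specialize (Hexp l Hl). apply (Rmult_le_reg_l l); [assumption|].
  replace (l * (l * M)) with (l ^ 2 * M) by ring. lra.
Qed.

Definition cnd_kernel {X : Type} (k : X -> X -> R) : Prop :=
  forall (n : nat) (xs : nat -> X) (c : nat -> R), sum_to n c = 0 ->
    sum_to n (fun i => sum_to n (fun j => c i * c j * k (xs i) (xs j))) <= 0.

Lemma cnd_sq_dist_of_gaussian_pd {X : Type} (d : X -> X -> R) :
  (forall l : R, 0 < l -> pd_kernel d (fun x y => exp (- l * (d x y) ^ 2))) ->
  cnd_kernel (fun x y => d x y ^ 2).
Proof.
  intros Hpd n xs c Hc.
  apply (gram_nonpos_of_gaussian_gram_nonneg n c (fun i j => d (xs i) (xs j) ^ 2)).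
  - intros i j; apply pow2_ge_0.
  - exact Hc.
  - intros l Hl; exact (proj2 (Hpd l Hl) n xs c).
Qed.

Lemma cnd_kernel_four {X : Type} (k : X -> X -> R) :
  cnd_kernel k -> (forall x y, k x y = k y x) -> (forall x, k x x = 0) ->
  forall x0 x1 x2 x3 c0 c1 c2 c3, c0 + c1 + c2 + c3 = 0 ->
  c0 * c1 * k x0 x1 + c0 * c2 * k x0 x2 + c0 * c3 * k x0 x3
  + c1 * c2 * k x1 x2 + c1 * c3 * k x1 x3 + c2 * c3 * k x2 x3 <= 0.
Proof.
  intros Hk Hsym Hdiag x0 x1 x2 x3 c0 c1 c2 c3 Hc.
  specialize (Hk 4%nat (fun i => match i with 0 => x0 | 1 => x1 | 2 => x2 | _ => x3 end)%nat
                       (fun i => match i with 0 => c0 | 1 => c1 | 2 => c2 | _ => c3 end)%nat).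
  cbn [sum_to] in Hk. rewrite !Hdiag in Hk.
  rewrite (Hsym x1 x0), (Hsym x2 x0), (Hsym x3 x0),
          (Hsym x2 x1), (Hsym x3 x1), (Hsym x3 x2) in Hk.
  assert (H := Hk ltac:(lra)). lra.
Qed.

Lemma sq_dist_on_segment {X : Type} (d : X -> X -> R) :
  is_metric d -> cnd_kernel (fun x y => d x y ^ 2) ->
  forall x y p s, d x p = s * d x y -> d p y = (1 - s) * d x y ->
  forall z, d z p ^ 2 = (1 - s) * d z x ^ 2 + s * d z y ^ 2 - s * (1 - s) * d x y ^ 2.
Proof.
  intros (_ & Hzero & Hsym & _) Hcnd x y p s Hxp Hpy z.
  assert (Hdiag : forall u, d u u ^ 2 = 0)
    by (intros u; rewrite (proj2 (Hzero u u) eq_refl); ring).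
  (* Coefficients (1, s - 1 - r, -s, r) on (p, x, y, z): the constant term in r cancels. *)
  assert (Hq : forall r,
    r * (d p z ^ 2 + s * (1 - s) * d x y ^ 2 - (1 - s) * d x z ^ 2 - s * d y z ^ 2)
    + r * r * (- d x z ^ 2) <= 0).
  { intros r.
    pose proof (cnd_kernel_four _ Hcnd (fun u v => f_equal (fun t => t ^ 2) (Hsym u v))
                  Hdiag p x y z 1 (s - 1 - r) (- s) r ltac:(ring)) as H.
    cbv beta in H. rewrite (Hsym p x), Hxp, Hpy in H. nra. }
  apply linear_coef_eq0_of_quadratic_nonpos in Hq.
  rewrite (Hsym z p), (Hsym z x), (Hsym z y). lra.
Qed.

Lemma geodesic_dist_from_ends {X : Type} (d : X -> X -> R) g L x y t :
  is_geodesic d g L x y -> 0 <= t <= L ->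
  d x (g t) = t / L * d x y /\ d (g t) y = (1 - t / L) * d x y.
Proof.
  intros (HL & H0 & HLy & Hg) Ht.
  assert (Hxy : d x y = L).
  { rewrite <- H0, <- HLy, Hg by lra. rewrite Rabs_left1 by lra. ring. }
  assert (Hxt : d x (g t) = t).
  { rewrite <- H0, Hg by lra. rewrite Rabs_left1 by lra. ring. }
  assert (Hty : d (g t) y = L - t).
  { rewrite <- HLy, Hg by lra. rewrite Rabs_left1 by lra. ring. }
  rewrite Hxy, Hxt, Hty.
  destruct (Req_dec L 0) as [HL0|HL0].
  - assert (t = 0) by lra. subst. unfold Rdiv. split; ring.
  - split; field; lra.
Qed.

Lemma sq_dist_along_geodesic {X : Type} (d : X -> X -> R) g L x y t :
  is_metric d -> cnd_kernel (fun x y => d x y ^ 2) ->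
  is_geodesic d g L x y -> 0 <= t <= L ->
  exists s, forall z,
    d z (g t) ^ 2 = (1 - s) * d z x ^ 2 + s * d z y ^ 2 - s * (1 - s) * d x y ^ 2.
Proof.
  intros Hm Hcnd Hg Ht. destruct (geodesic_dist_from_ends d g L x y t Hg Ht) as [Hx Hy].
  exists (t / L). exact (sq_dist_on_segment d Hm Hcnd x y (g t) (t / L) Hx Hy).
Qed.

(* In R^n, p = (1-u-v) a + u b + v c satisfies exactly this identity for every z. *)
Definition barycentric {X : Type} (d : X -> X -> R) (a b c p : X) (u v : R) : Prop :=
  forall z, d z p ^ 2 = (1 - u - v) * d z a ^ 2 + u * d z b ^ 2 + v * d z c ^ 2
    - ((1 - u - v) * u * d a b ^ 2 + u * v * d b c ^ 2 + (1 - u - v) * v * d a c ^ 2).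

Lemma barycentric_sq_dist {X : Type} (d : X -> X -> R) a b c p q u1 v1 u2 v2 :
  is_metric d -> barycentric d a b c p u1 v1 -> barycentric d a b c q u2 v2 ->
  d p q ^ 2 = d a b ^ 2 * (u1 - u2) ^ 2
    + (d a b ^ 2 + d a c ^ 2 - d b c ^ 2) * (u1 - u2) * (v1 - v2)
    + d a c ^ 2 * (v1 - v2) ^ 2.
Proof.
  intros (_ & Hzero & Hsym & _) Hp Hq.
  assert (Hd : forall x, d x x = 0) by (intros; apply Hzero; reflexivity).
  rewrite (Hsym p q), (Hp q), (Hsym q a), (Hsym q b), (Hsym q c), (Hq a), (Hq b), (Hq c).
  rewrite !Hd, (Hsym b a), (Hsym c a), (Hsym c b). ring.
Qed.

Lemma triangle_gram_det x y z :
  0 <= x -> 0 <= y -> 0 <= z -> z <= x + y -> x <= y + z -> y <= x + z ->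
  ((x ^ 2 + y ^ 2 - z ^ 2) / 2) ^ 2 <= x ^ 2 * y ^ 2.
Proof.
  intros Hx Hy Hz Hxy Hyz Hxz.
  (* Heron's factorisation of 4 x^2 y^2 - (x^2 + y^2 - z^2)^2. *)
  assert (H : 0 <= (z - x + y) * (z + x - y) * ((x + y - z) * (x + y + z)))
    by (repeat apply Rmult_le_pos; lra).
  nra.
Qed.

(* [[S, T], [T, U]] squares to M = [[P, g], [g, Q]]; the witness is
   (M + sqrt(det M) I) / sqrt(tr M + 2 sqrt(det M)). *)
Lemma psd2_sym_sqrt P Q g : 0 <= P -> 0 <= Q -> g ^ 2 <= P * Q ->
  exists S T U, S ^ 2 + T ^ 2 = P /\ S * T + T * U = g /\ T ^ 2 + U ^ 2 = Q.
Proof.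
  intros HP HQ Hg.
  set (s := sqrt (P * Q - g ^ 2)). set (tau := sqrt (P + Q + 2 * s)).
  assert (Hs0 : 0 <= s) by apply sqrt_pos.
  assert (Hs2 : s * s = P * Q - g ^ 2) by (apply sqrt_sqrt; lra).
  assert (Ht2 : tau * tau = P + Q + 2 * s) by (apply sqrt_sqrt; lra).
  destruct (Req_dec (P + Q + 2 * s) 0) as [Z|NZ].
  - exists 0, 0, 0. assert (P = 0) by lra. assert (Q = 0) by lra.
    assert (g = 0) by nra. subst. repeat split; ring.
  - assert (Htau : tau <> 0) by (intro E; rewrite E in Ht2; lra).
    exists ((P + s) / tau), (g / tau), ((Q + s) / tau).
    repeat split; field_simplify_eq; auto;
      replace (tau ^ 2) with (P + Q + 2 * s) by (rewrite <- Ht2; ring); nra.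
Qed.

Lemma embeds_of_barycentric {X : Type} (d : X -> X -> R) (a b c : X) (A : X -> Prop) :
  is_metric d -> (forall p, A p -> exists u v, barycentric d a b c p u v) ->
  embeds_in_euclidean d A.
Proof.
  intros Hm HA. pose proof Hm as (Hpos & _ & Hsym & Htri).
  assert (Hdet : ((d a b ^ 2 + d a c ^ 2 - d b c ^ 2) / 2) ^ 2 <= d a b ^ 2 * d a c ^ 2).
  { apply triangle_gram_det; try apply Hpos.
    - rewrite (Hsym a b); apply Htri.
    - rewrite (Hsym b c); apply Htri.
    - apply Htri. }
  destruct (psd2_sym_sqrt _ _ _ (pow2_ge_0 (d a b)) (pow2_ge_0 (d a c)) Hdet)
    as (S & T & U & HP & Hg & HQ).
  set (w := fun p => epsilon (inhabits (0, 0))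
                       (fun uv => barycentric d a b c p (fst uv) (snd uv))).
  exists 2%nat, (fun p i => match i with
                           | 0%nat => S * fst (w p) + T * snd (w p)
                           | _ => T * fst (w p) + U * snd (w p)
                           end).
  intros p q Hp Hq.
  assert (Hwp : barycentric d a b c p (fst (w p)) (snd (w p))).
  { apply epsilon_spec. destruct (HA p Hp) as (u & v & H). now exists (u, v). }
  assert (Hwq : barycentric d a b c q (fst (w q)) (snd (w q))).
  { apply epsilon_spec. destruct (HA q Hq) as (u & v & H). now exists (u, v). }
  pose proof (barycentric_sq_dist d a b c p q _ _ _ _ Hm Hwp Hwq) as Hpq.
  unfold euclid_dist. simpl sumsq.
  rewrite <- (sqrt_pow2 (d p q)) by apply Hpos. f_equal.
  rewrite Hpq.
  replace (d a b ^ 2 + d a c ^ 2 - d b c ^ 2) with (2 * (S * T + T * U))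
    by (rewrite Hg; field).
  rewrite <- HP, <- HQ. ring.
Qed.

Theorem theorem1 (X : Type) (d : X -> X -> R) :
  geodesic_space d ->
  (forall lambda : R, 0 < lambda ->
     pd_kernel d (fun x y => exp (- lambda * (d x y) ^ 2))) ->
  alexandrov_flat d.
Proof.
  intros Hgeo Hpd. split; [exact Hgeo|].
  pose proof (proj1 Hgeo) as Hm.
  pose proof (cnd_sq_dist_of_gaussian_pd d Hpd) as Hcnd.
  intros a b c gab gbc gac Lab Lbc Lac Hab Hbc Hac.
  apply (embeds_of_barycentric d a b c _ Hm).
  intros p [[t [Ht ->]] | [[t [Ht ->]] | [t [Ht ->]]]].
  - destruct (sq_dist_along_geodesic d _ _ _ _ t Hm Hcnd Hab Ht) as [s Hs].
    exists s, 0. intros z. rewrite Hs. ring.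
  - destruct (sq_dist_along_geodesic d _ _ _ _ t Hm Hcnd Hbc Ht) as [s Hs].
    exists (1 - s), s. intros z. rewrite Hs. ring.
  - destruct (sq_dist_along_geodesic d _ _ _ _ t Hm Hcnd Hac Ht) as [s Hs].
    exists 0, s. intros z. rewrite Hs. ring.
Qed.
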